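(* There exists a persuasion instance (with a single world, a single type consisting of two agents, two actions, and $d=1$) such that for every representative set $\bar{\mathcal A}$, no optimal private policy is supported only on representative joint actions; that is, every stable private policy $\sigma:\Omega\to\Delta(\bar{\mathcal A}\times G)$ achieves strictly smaller principal utility than some stable private policy $\sigma':\Omega\to\Delta(\mathcal A\times G')$.
   Context: A persuasion instance consists of: a finite set $\Omega$ of worlds; a prior $\mu\in\Delta(\Omega)$; agents $N=\{1,\dots,n\}$; a finite action set $A$; a partition $\mathcal T$ of $N$ into nonempty sets called types; for each $T\in\mathcal T$ a utility $u_T(a,\rho\mid\omega)\in\mathbb R$ defined for $a\in A$, action profiles $\rho$, and $\omega\in\Omega$; a principal utility $u_0(\rho\mid\omega)\in\mathbb R$; and an integer $d\ge 1$ (maximum coalition size). Joint actions are $\mathbf a\in\mathcal A=A^n$; the action profile of $\mathbf a$ is $\rho_{\mathbf a}:\mathcal T\times A\to\mathbb Z_{\ge0}$, $\rho_{\mathbf a}(T,a)=|\{i\in T:a_i=a\}|$. For $i\in T$, $u_i(\mathbf a\mid\omega)=u_T(a_i,\rho_{\mathbf a}\mid\omega)$. A policy is a map $\sigma:\Omega\to\Delta(\mathcal A\times G)$ (finitely supported distributions), where $G$ is a set of tuples $\mathbf g=(g_i)_{i\in N}$; elements $s=(\mathbf a,\mathbf g)$ are meta-signals. In the private mode agent $i$ observes only $s_i=(a_i,g_i)$. Agent $i$'s posterior upon observing $s_i$ is $\Pr(\tilde{\mathbf a},\omega\mid s_i)=\mu(\omega)\,\sigma(\{s'=(\tilde{\mathbf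 a},\mathbf g'):s'_i=s_i\}\mid\omega)\big/\sum_{\omega'}\mu(\omega')\,\sigma(\{s':s'_i=s_i\}\mid\omega')$. A meta-signal $s$ is unstable if there exist a nonempty $N'\subseteq N$ with $|N'|\le d$ and actions $(a'_i)_{i\in N'}$ such that for every $i\in N'$: $\sum_{\tilde{\mathbf a},\omega}\Pr(\tilde{\mathbf a},\omega\mid s_i)\,\big(u_i(\tilde{\mathbf a}\oplus\mathbf a'\mid\omega)-u_i(\tilde{\mathbf a}\mid\omega)\big)>0$, where $\tilde{\mathbf a}\oplus\mathbf a'$ replaces $\tilde a_i$ by $a'_i$ for all $i\in N'$; otherwise $s$ is stable. A policy is stable if every meta-signal it sends with positive probability is stable. The principal's utility is $u_0(\sigma)=\sum_\omega\mu(\omega)\sum_{(\mathbf a,\mathbf g)}\sigma((\mathbf a,\mathbf g)\mid\omega)\,u_0(\rho_{\mathbf a}\mid\omega)$. An optimal private policy is a stable private policy maximizing $u_0$ among all stable private policies. A representative set $\bar{\mathcal A}\subseteq\mathcal A$ contains, for each realizable action profile $\rho$, exactly one $\bar{\mathbf a}$ with $\rho_{\bar{\mathbf a}}=\rho$. *)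

From HB Require Import structures.
From mathcomp Require Import all_boot all_order all_algebra.
Set Implicit Arguments. Unset Strict Implicit. Unset Printing Implicit Defensive.
Import Order.TTheory GRing.Theory Num.Theory.
Local Open Scope ring_scope.

(* Agents are 'I_nagents; types are given by the map [typ] into the finite
   type [Ty] of type labels (the partition is the family of fibres). *)
Unset Implicit Arguments.
Record instance (R : realFieldType) := Instance {
  World : finType;
  prior : World -> R;
  nagents : nat;
  Act : finType;
  Ty : finType;
  typ : 'I_nagents -> Ty;
  uT : Ty -> Act -> {ffun Ty * Act -> nat} -> World -> R;
  u0 : {ffun Ty * Act -> nat} -> World -> R;
  dmax : nat }.
Arguments World {R} i.
Arguments prior {R} i _.
Arguments nagents {R} i.
Arguments Act {R} i.
Arguments Ty {R} i.
Arguments typ {R} i _.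
Arguments uT {R} i _ _ _ _.
Arguments u0 {R} i _ _.
Arguments dmax {R} i.
Set Implicit Arguments.

Section Persuasion.
Variable R : realFieldType.
Variable I : instance R.

Definition valid_instance : Prop :=
  [/\ (forall w, 0 <= prior I w),
      \sum_(w : World I) prior I w = 1,
      (forall T : Ty I, exists i, typ I i = T)
    & (1 <= dmax I)%N].

Definition jact := {ffun 'I_(nagents I) -> Act I}.

Definition profile (a : jact) : {ffun Ty I * Act I -> nat} :=
  [ffun p => #|[set i | (typ I i == p.1) && (a i == p.2)]|].

Definition ui (i : 'I_(nagents I)) (a : jact) (w : World I) : R :=
  uT I (typ I i) (a i) (profile a) w.

Definition meta (S : eqType) := (jact * {ffun 'I_(nagents I) -> S})%type.

(* a policy: finitely supported distributions sigma(. | w) *)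
Record policy (S : eqType) := Policy {
  supp : seq (meta S);
  prob : World I -> meta S -> R }.

Definition valid_policy S (sg : policy S) : Prop :=
  [/\ uniq (supp sg),
      (forall w s, 0 <= prob sg w s),
      (forall w s, s \notin supp sg -> prob sg w s = 0)
    & (forall w, \sum_(s <- supp sg) prob sg w s = 1)].

(* what agent i observes in the private mode: s_i = (a_i, g_i) *)
Definition obs S i (s : meta S) : (Act I * S)%type := (s.1 i, s.2 i).

Definition prob_obs S (sg : policy S) i (o : Act I * S) w : R :=
  \sum_(s <- supp sg | obs i s == o) prob sg w s.

Definition joint_obs S (sg : policy S) i (o : Act I * S) (b : jact) w : R :=
  \sum_(s <- supp sg | (s.1 == b) && (obs i s == o)) prob sg w s.

Definition posterior S (sg : policy S) i (o : Act I * S) (b : jact) w : R :=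
  prior I w * joint_obs sg i o b w /
  \sum_(w' : World I) prior I w' * prob_obs sg i o w'.

Definition deviate (b : jact) (N' : {set 'I_(nagents I)}) (a' : jact) : jact :=
  [ffun j => if j \in N' then a' j else b j].

Definition unstable S (sg : policy S) (s : meta S) : Prop :=
  exists N' : {set 'I_(nagents I)},
    [/\ N' != set0, (#|N'| <= dmax I)%N &
    exists a' : jact, forall i, i \in N' ->
      0 < \sum_(b : jact) \sum_(w : World I)
            posterior sg i (obs i s) b w * (ui i (deviate b N' a') w - ui i b w)].

Definition stable S (sg : policy S) (s : meta S) : Prop := ~ unstable sg s.

Definition sent S (sg : policy S) (s : meta S) : Prop :=
  0 < \sum_(w : World I) prior I w * prob sg w s.

Definition stable_policy S (sg : policy S) : Prop :=
  forall s, sent sg s -> stable sg s.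

Definition util0 S (sg : policy S) : R :=
  \sum_(w : World I) prior I w *
    \sum_(s <- supp sg) prob sg w s * u0 I (profile s.1) w.

Definition is_repr (Ab : {set jact}) : Prop :=
  forall a : jact, #|[set b in Ab | profile b == profile a]| = 1%N.

Definition supported_on S (Ab : {set jact}) (sg : policy S) : Prop :=
  forall w s, prob sg w s != 0 -> s.1 \in Ab.

End Persuasion.

(* Two agents of one type choose to enter (true) or stay out (false).  At the
   profile where nobody enters, an agent who knows this gains by entering, so
   a stable policy can recommend "stay out" to agent i only when i is unsure
   whether the other agent enters.  A representative set keeps only one of the
   two profiles with a single entrant, so for one of the agents the
   recommendation "stay out" reveals that nobody enters; hence every stable
   policy supported on it never realises the principal's preferred profile and
   earns 0.  Mixing uniformly over the three profiles with at most one entrant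
   is stable and earns 1/3. *)
From Pilot Require Import Defs.
From HB Require Import structures.
From mathcomp Require Import all_boot all_order all_algebra.
From mathcomp Require Import reals.
From mathcomp Require Import lra.
Import Order.TTheory GRing.Theory Num.Theory.
Local Open Scope ring_scope.

Lemma prob_obs_gt0 {R : realFieldType} {I : instance R} {S} {sg : policy I S} i {s w} :
  valid_policy sg -> 0 < prob sg w s -> 0 < prob_obs sg i (obs i s) w.
Proof.
case=> supp_uniq prob_ge0 prob_out _ prob_s_gt0.
have s_supp : s \in supp sg.
  by apply: contraT => /(prob_out w) prob_s0; rewrite prob_s0 ltxx in prob_s_gt0.
rewrite /prob_obs big_mkcond (bigD1_seq s) //= eqxx.
have : 0 <= \sum_(s' <- supp sg | s' != s)
    (if obs i s' == obs i s then prob sg w s' else 0).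
  by apply: sumr_ge0 => s' _; case: ifP.
lra.
Qed.

Definition agent1 : 'I_2 := @Ordinal 2 1 isT.

Lemma agent2_cases (j : 'I_2) : j = ord0 \/ j = agent1.
Proof. by case: j => -[|[|//]] j_lt; [left | right]; apply: val_inj. Qed.

Section EntryGame.
Variable R : realFieldType.

Definition entry_payoff (_ : unit) (a : bool) (rho : {ffun unit * bool -> nat})
    (_ : unit) : R :=
  if a then (if rho (tt, true) == 1%N then 7 else 0)
  else (if rho (tt, true) == 0%N then 6 else 2).

Definition entry_principal (rho : {ffun unit * bool -> nat}) (_ : unit) : R :=
  if rho (tt, true) == 0%N then 1 else 0.

Definition entry_instance : instance R :=
  @Defs.Instance R unit (fun _ => 1) 2 bool unit (fun _ => tt)
    entry_payoff entry_principal 1.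

Local Notation I := entry_instance.

Lemma entry_instance_valid : valid_instance I.
Proof.
split=> //=; first by rewrite (big_pred1 tt) // => -[].
by move=> -[]; exists ord0.
Qed.

Lemma sum_world (F : World I -> R) : \sum_(w : World I) F w = F tt.
Proof. by rewrite (big_pred1 tt) // => -[]. Qed.

Definition pair_jact (x y : bool) : jact I :=
  [ffun j => if j == ord0 then x else y].

Lemma pair_jactE (b : jact I) : b = pair_jact (b ord0) (b agent1).
Proof. by apply/ffunP => j; rewrite ffunE; case: (agent2_cases j) => ->. Qed.

Lemma pair_jact_inj x y x' y' :
  pair_jact x y = pair_jact x' y' -> x = x' /\ y = y'.
Proof.
move=> /ffunP eq_xy; move: (eq_xy ord0) (eq_xy agent1).
by rewrite !ffunE.
Qed.

Lemma profile_entry (b : jact I) c :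
  profile b (tt, c) = ((b ord0 == c) + (b agent1 == c))%N.
Proof.
rewrite ffunE -sum1_card big_mkcond /= big_ord_recl big_ord_recl big_ord0 !inE /=.
have -> : lift ord0 ord0 = agent1 by apply: val_inj.
by case: (b ord0 == c); case: (b agent1 == c).
Qed.

Lemma profile_pair_jactC x y : profile (pair_jact x y) = profile (pair_jact y x).
Proof.
by apply/ffunP => -[[] c]; rewrite !profile_entry !ffunE /= addnC.
Qed.

Lemma expected_gainE S (sg : policy I S) i o (f : jact I -> World I -> R) :
  \sum_(b : jact I) \sum_(w : World I) posterior sg i o b w * f b w =
  (\sum_(s <- supp sg | obs i s == o) prob sg tt s * f s.1 tt)
    / prob_obs sg i o tt.
Proof.
under eq_bigr => b _ do rewrite sum_world /posterior sum_world /= !mul1r mulrAC.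
rewrite -mulr_suml; congr (_ / _).
under eq_bigr => b _ do rewrite /joint_obs big_distrl /= big_mkcond /=.
rewrite exchange_big /= [RHS]big_mkcond /=; apply: eq_bigr => s _.
rewrite (bigD1 s.1) //= eqxx /= big1 ?addr0 //.
by move=> b /negbTE; rewrite eq_sym => ->.
Qed.

Lemma entering_alone_gain (i : 'I_(nagents I)) :
  ui i (deviate (pair_jact false false) [set i] [ffun _ => true]) tt
    - ui i (pair_jact false false) tt = 1.
Proof.
rewrite /ui /= /entry_payoff !profile_entry !ffunE !inE.
by case: (agent2_cases i) => -> /=; lra.
Qed.

Lemma repr_reveals_nobody_enters {Ab : {set jact I}} : is_repr Ab ->
  exists i : 'I_(nagents I),
    forall b, b \in Ab -> b i = false -> b = pair_jact false false.
Proof.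
move=> Ab_repr.
have not_both : ~~ ((pair_jact false true \in Ab) && (pair_jact true false \in Ab)).
  apply/negP => /andP [in_FT in_TF].
  have := Ab_repr (pair_jact false true).
  have : [set pair_jact false true; pair_jact true false] \subset
         [set b in Ab | profile b == profile (pair_jact false true)].
    apply/subsetP => b; rewrite !inE => /orP [] /eqP ->.
      by rewrite in_FT eqxx.
    by rewrite in_TF profile_pair_jactC eqxx.
  move/subset_leq_card; rewrite cards2.
  have -> : pair_jact false true != pair_jact true false.
    by apply/eqP => /pair_jact_inj [].
  by move=> two_le card1; rewrite card1 in two_le.
case: (boolP (pair_jact true false \in Ab)) => in_TF.
  exists ord0 => b b_in b0; rewrite (pair_jactE b) b0.
  case b1: (b agent1) => //.
  rewrite (pair_jactE b) b0 b1 in b_in.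
  by rewrite b_in in_TF in not_both.
exists agent1 => b b_in b1; rewrite (pair_jactE b) b1.
case b0: (b ord0) => //.
rewrite (pair_jactE b) b0 b1 in b_in.
by rewrite b_in in in_TF.
Qed.

(* If [sg] sent "nobody enters" with positive probability, the agent given by
   [repr_reveals_nobody_enters] would, on its recommendation, know the profile
   and enter. *)
Lemma util0_repr_eq0 {Ab : {set jact I}} {S} {sg : policy I S} :
  is_repr Ab -> valid_policy sg -> stable_policy sg -> supported_on Ab sg ->
  util0 sg = 0.
Proof.
move=> Ab_repr sg_valid sg_stable sg_Ab.
have [i reveals] := repr_reveals_nobody_enters Ab_repr.
have [_ prob_ge0 _ _] := sg_valid.
rewrite /util0 sum_world mul1r; apply: big1_seq => s _.
rewrite /= /entry_principal profile_entry.
case nobody: (_ == 0)%N; last by rewrite mulr0.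
have s_none : s.1 = pair_jact false false.
  by rewrite (pair_jactE s.1); move: nobody; case: (s.1 ord0); case: (s.1 agent1).
apply/eqP; rewrite mulr1; apply: contraT => prob_s_neq0.
have prob_s_gt0 : 0 < prob sg tt s by rewrite lt_def prob_s_neq0 prob_ge0.
apply: False_ind; apply: (sg_stable s); first by rewrite /sent sum_world mul1r.
exists [set i]; split; [by apply/set0Pn; exists i; rewrite set11 | by rewrite cards1 |].
exists [ffun _ => true] => j; rewrite inE => /eqP ->.
rewrite expected_gainE (eq_bigr (fun s' => prob sg tt s')); last first.
  move=> s' /eqP obs_eq.
  have [->|prob_s'_neq0] := eqVneq (prob sg tt s') 0; first by rewrite mul0r.
  suff -> : s'.1 = pair_jact false false by rewrite entering_alone_gain mulr1.
  apply: reveals; first exact: (sg_Ab tt).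
  move: obs_eq; rewrite /obs s_none => -[-> _].
  by rewrite ffunE; case: (agent2_cases i) => ->.
by rewrite divff ?ltr01 // gt_eqF // (prob_obs_gt0 _ sg_valid prob_s_gt0).
Qed.

Definition no_signal : {ffun 'I_(nagents I) -> unit} := [ffun _ => tt].

Definition at_most_one_entrant : seq (meta I unit) :=
  [:: (pair_jact false false, no_signal); (pair_jact false true, no_signal);
      (pair_jact true false, no_signal)].

Definition uniform_policy : policy I unit :=
  Policy at_most_one_entrant
    (fun _ s => if s \in at_most_one_entrant then 3^-1 else 0).

Lemma uniform_policy_valid : valid_policy uniform_policy.
Proof.
split=> /=.
- rewrite !inE !xpair_eqE !eqxx !andbT.
  by rewrite negb_or -andbA; apply/and3P; split; apply/eqP => /pair_jact_inj [].
- by move=> w s; case: ifP => // _; rewrite invr_ge0; lra.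
- by move=> w s /negbTE ->.
- by move=> w; rewrite !big_cons big_nil !inE !eqxx /= ?orbT; lra.
Qed.

Lemma uniform_policy_util : util0 uniform_policy = 3^-1.
Proof.
rewrite /util0 sum_world mul1r /= !big_cons big_nil !inE !eqxx /= ?orbT.
by rewrite /entry_principal !profile_entry !ffunE /=; lra.
Qed.

(* With d = 1 only single-agent deviations matter; the recommendation "stay
   out" leaves the other agent entering with probability 1/2, and then the
   expected gain of entering is (1/2)(7 - 6) + (1/2)(0 - 2) < 0. *)
Lemma uniform_policy_stable : stable_policy uniform_policy.
Proof.
move=> s s_sent [N' [N'_neq0 N'_le1 [a' gain_gt0]]].
have s_in : s \in at_most_one_entrant.
  by move: s_sent; rewrite /sent sum_world mul1r /=; case: ifP; rewrite ?ltxx.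
have [i N'E] : exists i, N' = [set i].
  by apply/cards1P; rewrite eqn_leq N'_le1 card_gt0 N'_neq0.
move: (gain_gt0 i); rewrite N'E set11 expected_gainE => /(_ isT).
apply/negP; rewrite -leNgt; apply: mulr_le0_ge0; last first.
  rewrite invr_ge0 sumr_ge0 // => s' _ /=.
  by case: (s' \in _) => //; rewrite invr_ge0; lra.
move: s_in; rewrite !inE => /or3P [] /eqP ->; case: (agent2_cases i) => ->;
  rewrite /= !big_cons big_nil /obs /= !ffunE /=.
all: rewrite /ui /entry_payoff /= !profile_entry !ffunE /= !inE /= !eqxx ?orbT /=.
all: by case: (a' _) => /=; rewrite ?invr_ge0; lra.
Qed.

End EntryGame.

Theorem proposition1 (R : realType) :
  exists I : instance R,
    [/\ valid_instance I, #|World I| = 1%N, nagents I = 2%N, #|Act I| = 2%N &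
        #|Ty I| = 1%N] /\ dmax I = 1%N /\
    forall Ab : {set jact I}, is_repr Ab ->
    forall (S : eqType) (sg : policy I S),
      valid_policy sg -> stable_policy sg -> supported_on Ab sg ->
      exists (S' : eqType) (sg' : policy I S'),
        [/\ valid_policy sg', stable_policy sg' & util0 sg < util0 sg'].
Proof.
exists (entry_instance R); split.
  by split; rewrite /= ?card_unit ?card_bool //; exact: entry_instance_valid.
split=> // Ab Ab_repr S sg sg_valid sg_stable sg_Ab.
exists unit, (uniform_policy R); split.
- exact: uniform_policy_valid.
- exact: uniform_policy_stable.
rewrite (util0_repr_eq0 _ Ab_repr sg_valid sg_stable sg_Ab) uniform_policy_util.
by rewrite invr_gt0; lra.
Qed.
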